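(* Let $G$ be a finite group whose set of irreducible character degrees is $cd(G) = \{1, m\}$ and whose set of conjugacy class sizes is $cc(G) = \{1, s\}$. Then $AMZA(G) = AMZL(G)$.
   Context: $cd(G)$ is the set of degrees of irreducible complex characters of $G$ and $cc(G)$ the set of sizes of conjugacy classes. For a finite group $G$, $\mathrm{Irr}(G)$ is the set of irreducible complex characters, $d_\chi=\chi(e)$, $\mathrm{Conj}(G)$ the set of conjugacy classes, $|C|$ the class size and $\chi(C)$ the value of $\chi$ on $C$. $ZL^1(G)$ is the centre of the group algebra $L^1(G)$ and $ZA(G)$ the closed span of $\mathrm{Irr}(G)$ in the Fourier algebra $A(G)$; $AMZL(G)$, $AMZA(G)$ are their amenability constants (infimum of the bounds of bounded approximate diagonals), which for finite $G$ are given by \[ AMZL(G) = \frac{1}{|G|^2}\sum_{C,C'\in\mathrm{Conj}(G)} |C||C'|\left|\sum_{\chi\in\mathrm{Irr}(G)} d_\chi^2\,\chi(C)\overline{\chi(C')}\right|,\qquad AMZA(G) = \frac{1}{|G|^2}\sum_{\chi,\chi'\in\mathrm{Irr}(G)} d_\chi d_{\chi'}\left|\sum_{C\in\mathrm{Conj}(G)} |C|^2\,\chi(C)\overline{\chi'(C)}\right|. \] *)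

From mathcomp Require Import all_boot all_order all_algebra all_fingroup all_solvable all_field all_character.
Set Implicit Arguments. Unset Strict Implicit. Unset Printing Implicit Defensive.
Import GRing.Theory Num.Theory.
Local Open Scope ring_scope.

Definition cdG (gT : finGroupType) (G : {group gT}) : seq algC :=
  [seq 'chi[G]_i 1%g | i : Iirr G].

Definition ccG (gT : finGroupType) (G : {group gT}) : seq nat :=
  [seq #|(C : {set gT})| | C <- enum (classes G)].

Definition AMZL (gT : finGroupType) (G : {group gT}) : algC :=
  (#|G|%:R ^+ 2)^-1 *
  \sum_(C in classes G) \sum_(C' in classes G)
     #|C|%:R * #|C'|%:R *
     `| \sum_(i : Iirr G) ('chi[G]_i 1%g) ^+ 2 * 'chi[G]_i (repr C)
                            * ('chi[G]_i (repr C'))^* |.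

Definition AMZA (gT : finGroupType) (G : {group gT}) : algC :=
  (#|G|%:R ^+ 2)^-1 *
  \sum_(i : Iirr G) \sum_(j : Iirr G)
     'chi[G]_i 1%g * 'chi[G]_j 1%g *
     `| \sum_(C in classes G) (#|C|%:R ^+ 2) * 'chi[G]_i (repr C)
                            * ('chi[G]_j (repr C))^* |.

From mathcomp Require Import all_boot all_order all_algebra all_fingroup all_solvable all_field all_character.
From mathcomp Require Import ring.
Set Implicit Arguments. Unset Strict Implicit. Unset Printing Implicit Defensive.
Import Order.TTheory GRing.Theory Num.Theory.
Local Open Scope ring_scope.

(* Both constants are rewritten as sums over G x G, resp. Irr(G) x Irr(G).
   If every degree is 1 or m, the AMZL summand at (g, h) is m^2 times the
   second-orthogonality kernel minus (m^2 - 1) times the kernel of the linear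
   characters, which only takes the values 0 and a = #{linear characters}; so
   taking absolute values only adds 2 (m^2 - 1) a on non-conjugate pairs with
   a nonzero linear kernel.  Dually, if every class has size 1 or s, the AMZA
   summand at (i, j) is s |G| [i = j] minus (s - 1) times the inner product of
   chi_i and chi_j over Z(G), which is 0 or chi_i(1) chi_j(1) |Z(G)|.  Both
   constants become polynomials in |G|, |Z(G)|, a, m and s, and they agree by
   the two counts of k = |Irr(G)|: k m^2 = |G| + (m^2 - 1) a and
   k s = |G| + (s - 1) |Z(G)|. *)

Section CharacterSums.

Variables (gT : finGroupType) (G : {group gT}).
Local Notation N := (#|G|%:R : algC).

Definition class_size (g : gT) : algC := #|(g ^: G)%g|%:R.
Definition sum_class_sizes : algC := \sum_(g in G) class_size g.
Definition Nlin : algC := #|[pred i : Iirr G | 'chi_i \is a linear_char]|%:R.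

(* deg2_kernel and class_dot are the inner sums of AMZL and AMZA, taken at
   elements rather than at class representatives. *)
Definition deg2_kernel (g h : gT) : algC :=
  \sum_i 'chi[G]_i 1%g ^+ 2 * 'chi_i g * ('chi_i h)^*.
Definition lin_kernel (g h : gT) : algC :=
  \sum_(i : Iirr G | 'chi_i \is a linear_char) 'chi_i g * ('chi_i h)^*.
Definition class_dot (i j : Iirr G) : algC :=
  \sum_(g in G) class_size g * 'chi_i g * ('chi_j g)^*.
Definition center_dot (i j : Iirr G) : algC :=
  \sum_(z in 'Z(G)%g) 'chi_i z * ('chi_j z)^*.

Lemma class_size_repr C : C \in classes G -> class_size (repr C) = #|C|%:R.
Proof. by case/repr_classesP=> _ {2}->. Qed.

Lemma class_sizeJ : {in G &, forall g h, class_size (g ^ h) = class_size g}.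
Proof. by move=> g h _ Gh; rewrite /class_size classGidl. Qed.

Lemma class_size_neq0 g : class_size g != 0.
Proof.
by rewrite pnatr_eq0 -lt0n card_gt0; apply/set0Pn; exists g; apply: class_refl.
Qed.

Lemma AMZL_sum_group :
  AMZL G = (N ^+ 2)^-1 * \sum_(g in G) \sum_(h in G) `|deg2_kernel g h|.
Proof.
rewrite /AMZL (sum_by_classes (R := algC)); last first.
  move=> g y _ Gy; apply: eq_bigr => h _; congr `|_|.
  by apply: eq_bigr => i _; rewrite cfunJ.
congr (_ * _); apply: eq_bigr => C _; rewrite (sum_by_classes (R := algC)); last first.
  by move=> h y _ Gy; congr `|_|; apply: eq_bigr => i _; rewrite (cfunJ _ h).
by rewrite big_distrr; apply: eq_bigr => C' _ /=; rewrite mulrA.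
Qed.

Lemma AMZA_sum_irr :
  AMZA G = (N ^+ 2)^-1 *
    \sum_i \sum_j 'chi[G]_i 1%g * 'chi[G]_j 1%g * `|class_dot i j|.
Proof.
rewrite /AMZA; congr (_ * _); apply: eq_bigr => i _; apply: eq_bigr => j _.
congr (_ * `|_|); rewrite /class_dot (sum_by_classes (R := algC)); last first.
  by move=> g y Gg Gy; rewrite class_sizeJ // !cfunJ.
by apply: eq_bigr => C CG; rewrite class_size_repr // expr2 !mulrA.
Qed.

Lemma NlinE : Nlin = \sum_(i : Iirr G | 'chi_i \is a linear_char) 1.
Proof. by rewrite sumr_const. Qed.

Lemma irr_lin_charE i : ('chi[G]_i \is a linear_char) = ('chi_i 1%g == 1).
Proof. by rewrite qualifE /= irr_char. Qed.

Lemma lin_kernel_eq0_or_Nlin g h : lin_kernel g h = 0 \/ lin_kernel g h = Nlin.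
Proof.
have [P0 | nzP] := eqVneq (lin_kernel g h) 0; [by left | right].
(* Multiplying by a linear 'chi_j permutes the linear characters, so lin_kernel g h
   is fixed by the factor 'chi_j g * ('chi_j h)^*. *)
have lin_term1 j : 'chi[G]_j \is a linear_char -> 'chi_j g * ('chi_j h)^* = 1.
  move=> Lj; pose mulj i := cfIirr ('chi[G]_j * 'chi_i).
  have muljE i : 'chi_(mulj i) = 'chi_j * 'chi_i.
    by rewrite cfIirrE // mul_lin_irr ?mem_irr.
  have mulj_inj : injective mulj.
    move=> i k /(congr1 (fun l => 'chi_l)); rewrite !muljE.
    by move/(mulrI (lin_char_unitr Lj)); apply: irr_inj.
  have lin_mulj i : ('chi_(mulj i) \is a linear_char) = ('chi_i \is a linear_char).
    by rewrite !irr_lin_charE muljE cfunE lin_char1 // mul1r.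
  have : lin_kernel g h = 'chi_j g * ('chi_j h)^* * lin_kernel g h.
    rewrite {1}/lin_kernel (reindex_inj mulj_inj) big_distrr.
    apply: eq_big => [i | i _]; first exact: lin_mulj.
    by rewrite muljE !cfunE rmorphM /=; ring.
  move/eqP; rewrite -subr_eq0 -{1}[lin_kernel g h]mul1r -mulrBl mulf_eq0.
  by rewrite (negPf nzP) orbF subr_eq0 => /eqP <-.
by rewrite /lin_kernel NlinE; apply: eq_bigr => i /lin_term1.
Qed.

Lemma Nlin_ge0 : 0 <= Nlin.
Proof. exact: ler0n. Qed.

Lemma lin_kernel_ge0 g h : 0 <= lin_kernel g h.
Proof. by case: (lin_kernel_eq0_or_Nlin g h) => ->; rewrite ?Nlin_ge0. Qed.

Lemma lin_kernel_class g h :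
  h \in G -> g \in (h ^: G)%g -> lin_kernel g h = Nlin.
Proof.
move=> Gh /eq_irr_mem_classP-/(_ Gh) chi_gh.
rewrite /lin_kernel NlinE; apply: eq_bigr => i Li.
by rewrite chi_gh -normCK normC_lin_char ?expr1n.
Qed.

Lemma Nlin_le_cent g : g \in G -> Nlin <= #|'C_G[g]%g|%:R.
Proof.
move=> Gg; have := second_orthogonality_relation g Gg.
rewrite class_refl mulr1n => <-.
rewrite (bigID (fun i => 'chi[G]_i \is a linear_char)) /= -[Nlin]addr0 lerD //.
  rewrite NlinE ler_sum // => i Li.
  by rewrite -normCK normC_lin_char ?expr1n.
by apply: sumr_ge0 => i _; rewrite -normCK exprn_ge0.
Qed.

Lemma sum_irr_group i : \sum_(g in G) 'chi[G]_i g = N * (i == 0)%:R.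
Proof.
rewrite -cfdot_irr irr0 cfdotE mulrA mulfV ?neq0CG // mul1r.
by apply: eq_bigr => g Gg; rewrite cfun1E Gg conjC1 mulr1.
Qed.

Lemma sum2_irr_kernel (w : Iirr G -> algC) :
  \sum_(g in G) \sum_(h in G) \sum_i w i * 'chi_i g * ('chi_i h)^* = N ^+ 2 * w 0.
Proof.
have factor i : \sum_(g in G) \sum_(h in G) w i * 'chi_i g * ('chi_i h)^*
    = w i * (N * (i == 0)%:R) * (N * (i == 0)%:R)^*.
  rewrite -sum_irr_group rmorph_sum -mulrA big_distrl big_distrr /=.
  apply: eq_bigr => g _; rewrite !big_distrr /=.
  by apply: eq_bigr => h _; rewrite !mulrA.
under eq_bigr do rewrite exchange_big /=.
rewrite exchange_big /= (eq_bigr _ (fun i _ => factor i)) /=.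
rewrite (bigD1 (0 : Iirr G)) //= mulr1 conjC_nat big1 => [|i nz_i].
  by rewrite addr0; ring.
by rewrite (negPf nz_i) !mulr0 mul0r.
Qed.

Lemma center_class_card1 g : g \in G -> (g \in 'Z(G)%g) = (#|(g ^: G)%g| == 1%N).
Proof.
move=> Gg; rewrite inE Gg; apply/cent_classP/cards1P => [-> | [y gGy]].
  by exists g.
by have := class_refl G g; rewrite gGy inE => /eqP {1}<-.
Qed.

Lemma irr_center_scalar i : exists2 mu : 'CF('Z(G)%g), mu \is a linear_char &
  {in 'Z(G)%g, forall z, 'chi[G]_i z = 'chi_i 1%g * mu z}.
Proof.
have [xi Lxi chiZ] := cfcenter_Res 'chi[G]_i.
have ZG_sub : 'Z(G)%g \subset ('Z('chi[G]_i))%CF.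
  by rewrite -cap_cfcenter_irr; apply: (bigcap_inf i).
exists ('Res['Z(G)%g] xi); first exact: cfRes_lin_char.
move=> z Zz; rewrite cfResE //; have Zchi_z := subsetP ZG_sub z Zz.
by rewrite -(cfResE _ (cfcenter_sub _) Zchi_z) chiZ cfunE.
Qed.

Lemma center_dot_eq0_or i j :
  center_dot i j = 0 \/ center_dot i j = 'chi_i 1%g * 'chi_j 1%g * #|'Z(G)%g|%:R.
Proof.
have [mu_i Lmu_i chiZ_i] := irr_center_scalar i.
have [mu_j Lmu_j chiZ_j] := irr_center_scalar j.
have -> : center_dot i j = 'chi_i 1%g * 'chi_j 1%g * (#|'Z(G)%g|%:R * '[mu_i, mu_j]).
  rewrite cfdotE mulVKf ?neq0CG // big_distrr; apply: eq_bigr => z Zz.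
  by rewrite chiZ_i // chiZ_j // rmorphM /= (geC0_conj (ltW (irr1_gt0 j))); ring.
have /irrP[k ->] := lin_char_irr Lmu_i; have /irrP[l ->] := lin_char_irr Lmu_j.
by rewrite cfdot_irr; case: (k == l); [right; rewrite mulr1 | left; rewrite !mulr0].
Qed.

Lemma center_dot_ge0 i j : 0 <= center_dot i j.
Proof.
case: (center_dot_eq0_or i j) => ->; rewrite ?lexx //.
by rewrite !mulr_ge0 ?ler0n ?char1_ge0 ?irr_char.
Qed.

Lemma center_dotii i : center_dot i i = 'chi_i 1%g ^+ 2 * #|'Z(G)%g|%:R.
Proof.
have [mu Lmu chiZ] := irr_center_scalar i.
rewrite /center_dot -sumr_const big_distrr; apply: eq_bigr => z Zz.
rewrite chiZ // rmorphM /= (geC0_conj (ltW (irr1_gt0 i))) mulrACA -normCK.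
by rewrite normC_lin_char // expr1n !mulr1 expr2.
Qed.

Lemma sum_mkcond_center (F : gT -> algC) :
  \sum_(g in G) (if g \in 'Z(G)%g then F g else 0) = \sum_(g in 'Z(G)%g) F g.
Proof.
rewrite -big_mkcondr; apply: eq_bigl => g; apply: andb_idl.
exact: (subsetP (center_sub G)).
Qed.

Lemma center_dotii_le i : center_dot i i <= N.
Proof.
have <- : \sum_(g in G) 'chi_i g * ('chi_i g)^* = N.
  have := congr1 (fun x => N * x) (cfnorm_irr i).
  by rewrite cfdotE mulVKf ?neq0CG // mulr1.
rewrite (bigID (fun g => g \in 'Z(G)%g)) /= big_mkcondr sum_mkcond_center.
by rewrite lerDl sumr_ge0 // => g _; rewrite -normCK exprn_ge0.
Qed.

Lemma sum2_irr1_dot (w : gT -> algC) (A : {set gT}) : 1%g \in A ->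
  \sum_i \sum_j 'chi[G]_i 1%g * 'chi[G]_j 1%g *
     (\sum_(g in A) w g * 'chi_i g * ('chi_j g)^*) = w 1%g * N ^+ 2.
Proof.
move=> A1.
have reg g : \sum_i 'chi[G]_i 1%g * 'chi_i g = N *+ (g == 1%g).
  by rewrite -cfRegE cfReg_sum sum_cfunE; apply: eq_bigr => i _; rewrite cfunE.
transitivity (\sum_(g in A) w g * (\sum_i 'chi[G]_i 1%g * 'chi_i g)
                               * (\sum_i 'chi[G]_i 1%g * 'chi_i g)^*).
  transitivity (\sum_i \sum_j \sum_(g in A)
      w g * ('chi[G]_i 1%g * 'chi_i g) * ('chi[G]_j 1%g * 'chi_j g)^*).
    apply: eq_bigr => i _; apply: eq_bigr => j _; rewrite big_distrr.
    apply: eq_bigr => g _ /=; rewrite rmorphM /= (geC0_conj (ltW (irr1_gt0 j))); ring.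
  under eq_bigr do rewrite exchange_big /=.
  rewrite exchange_big /=; apply: eq_bigr => g _.
  rewrite rmorph_sum exchange_big big_distrr /=; apply: eq_bigr => j _.
  by rewrite big_distrr big_distrl.
under eq_bigr do rewrite reg.
rewrite (bigD1 1%g) //= eqxx [X in _ + X]big1 => [|g /andP[_ /negPf->]] /=.
  by rewrite mulr1n conjC_nat addr0 expr2 mulrA.
by rewrite mulr0n mulr0 mul0r.
Qed.

Lemma sum_class_mem g :
  g \in G -> \sum_(h in G) (g \in (h ^: G)%g)%:R = class_size g.
Proof.
move=> Gg; rewrite (big_setID (g ^: G)%g) /= (setIidPr (class_subG Gg (subxx G))).
rewrite [X in _ + X]big1 ?addr0 => [|h /[!inE] /andP[hg _]].
  by rewrite /class_size -sumr_const; apply: eq_bigr => h; rewrite class_sym => ->.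
by rewrite class_sym (negPf hg).
Qed.

Lemma sum2_deg2_kernel : \sum_(g in G) \sum_(h in G) deg2_kernel g h = N ^+ 2.
Proof. by rewrite sum2_irr_kernel irr0 cfun11 expr1n mulr1. Qed.

Lemma sum2_lin_kernel_nonconj :
  \sum_(g in G) \sum_(h in G) lin_kernel g h * (g \notin (h ^: G)%g)%:R
    = N ^+ 2 - Nlin * sum_class_sizes.
Proof.
have sum2_lin : \sum_(g in G) \sum_(h in G) lin_kernel g h = N ^+ 2.
  have := sum2_irr_kernel (fun i => ('chi[G]_i \is a linear_char)%:R).
  rewrite /= irr0 cfun1_lin_char mulr1 => <-.
  apply: eq_bigr => g _; apply: eq_bigr => h _.
  rewrite /lin_kernel big_mkcond /=; apply: eq_bigr => i _.
  by case: ifP; rewrite ?mul1r ?mul0r.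
rewrite -sum2_lin /sum_class_sizes mulr_sumr -sumrB; apply: eq_bigr => g Gg.
rewrite -sum_class_mem // mulr_sumr -sumrB; apply: eq_bigr => h Gh.
have [gh | _] /= := boolP (g \in (h ^: G)%g).
  by rewrite (lin_kernel_class Gh gh) mulr0 mulr1 subrr.
by rewrite mulr1 mulr0 subr0.
Qed.

Lemma sum2_irr1_class_dot :
  \sum_i \sum_j 'chi[G]_i 1%g * 'chi[G]_j 1%g * class_dot i j = N ^+ 2.
Proof. by rewrite sum2_irr1_dot ?group1 // /class_size class1G cards1 mul1r. Qed.

Lemma sum2_irr1_center_dot_offdiag :
  \sum_i \sum_j 'chi[G]_i 1%g * 'chi[G]_j 1%g * center_dot i j * (i != j)%:R
    = N ^+ 2 - #|'Z(G)%g|%:R * \sum_i 'chi[G]_i 1%g ^+ 4.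
Proof.
have sum2 : \sum_i \sum_j 'chi[G]_i 1%g * 'chi[G]_j 1%g * center_dot i j = N ^+ 2.
  rewrite -[RHS]mul1r -(sum2_irr1_dot (fun=> 1) (group1 'Z(G)%G)).
  apply: eq_bigr => i _; apply: eq_bigr => j _; congr (_ * _).
  by apply: eq_bigr => z _; rewrite mul1r.
rewrite -sum2 mulr_sumr -sumrB; apply: eq_bigr => i _.
rewrite (bigD1 i) //= [X in _ = X - _](bigD1 i) //= eqxx mulr0 add0r center_dotii.
have -> : 'chi_i 1%g * 'chi_i 1%g * ('chi_i 1%g ^+ 2 * #|'Z(G)%g|%:R)
          = #|'Z(G)%g|%:R * 'chi_i 1%g ^+ 4 by ring.
rewrite [X in _ = X - _]addrC addrK; apply: eq_bigr => j ne_ji.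
by rewrite eq_sym ne_ji mulr1.
Qed.

Lemma Nirr_sum_inv_class_size : (Nirr G)%:R = \sum_(g in G) (class_size g)^-1.
Proof.
rewrite NirrE (sum_by_classes (R := algC)); last first.
  by move=> g h Gg Gh; rewrite class_sizeJ.
rewrite -sumr_const; apply: eq_bigr => C CG.
by rewrite -class_size_repr // mulfV ?class_size_neq0.
Qed.

End CharacterSums.

Section TwoDegrees.

Variables (gT : finGroupType) (G : {group gT}) (m : nat).
Hypothesis irr1_two : forall i : Iirr G, 'chi_i 1%g = 1 \/ 'chi_i 1%g = m%:R.
Hypothesis m_gt0 : (0 < m)%N.
Local Notation N := (#|G|%:R : algC).
Local Notation M := (m%:R ^+ 2 : algC).

Lemma irr1_sq i : 'chi[G]_i 1%g ^+ 2 = if 'chi_i \is a linear_char then 1 else M.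
Proof.
rewrite irr_lin_charE; case: eqP => [-> | ne1]; first exact: expr1n.
by case: (irr1_two i) => [/ne1 | ->].
Qed.

Lemma deg2_kernel_split g h : deg2_kernel G g h
  = M * \sum_i 'chi[G]_i g * ('chi_i h)^* - (M - 1) * lin_kernel G g h.
Proof.
rewrite /deg2_kernel /lin_kernel (big_mkcond (fun i => _ \is a linear_char)).
rewrite !mulr_sumr -sumrB /=.
by apply: eq_bigr => i _; rewrite irr1_sq; case: ifP => _; ring.
Qed.

Lemma norm_deg2_kernel g h : g \in G -> h \in G ->
  `|deg2_kernel G g h|
    = deg2_kernel G g h + 2 * (M - 1) * lin_kernel G g h * (g \notin (h ^: G)%g)%:R.
Proof.
move=> Gg Gh; rewrite deg2_kernel_split second_orthogonality_relation //.
have M_ge1 : 1 <= M by rewrite -natrX ler1n expn_gt0 m_gt0.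
have M1_ge0 : 0 <= M - 1 by rewrite subr_ge0.
have [gh | _] /= := boolP (g \in (h ^: G)%g).
  rewrite (lin_kernel_class Gh gh) mulr1n mulr0 addr0 ger0_norm //.
  have -> : M * #|'C_G[g]%g|%:R - (M - 1) * Nlin G
            = M * (#|'C_G[g]%g|%:R - Nlin G) + Nlin G by ring.
  by rewrite addr_ge0 ?Nlin_ge0 // mulr_ge0 ?subr_ge0 ?Nlin_le_cent ?(le_trans ler01).
by rewrite mulr0n mulr0 sub0r normrN ger0_norm ?mulr_ge0 ?lin_kernel_ge0 //; ring.
Qed.

Lemma AMZL_two_degrees : AMZL G
  = (N ^+ 2)^-1 * (N ^+ 2 + 2 * (M - 1) * (N ^+ 2 - Nlin G * sum_class_sizes G)).
Proof.
rewrite AMZL_sum_group; congr (_ * _).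
rewrite -sum2_lin_kernel_nonconj -sum2_deg2_kernel mulr_sumr -big_split.
apply: eq_bigr => g Gg /=.
rewrite mulr_sumr -big_split; apply: eq_bigr => h Gh /=.
by rewrite norm_deg2_kernel // !mulrA.
Qed.

Lemma Nirr_two_degrees : (Nirr G)%:R * M = N + (M - 1) * Nlin G.
Proof.
have -> : (Nirr G)%:R * M = \sum_(i : Iirr G) M.
  by rewrite sumr_const card_ord mulr_natl.
rewrite -irr_sum_square NlinE (big_mkcond (fun i => _ \is a linear_char)).
rewrite mulr_sumr -big_split /=.
by apply: eq_bigr => i _; rewrite irr1_sq; case: ifP => _; ring.
Qed.

Lemma sum_irr1_4 : \sum_i 'chi[G]_i 1%g ^+ 4 = M * N - (M - 1) * Nlin G.
Proof.
rewrite -irr_sum_square NlinE (big_mkcond (fun i => _ \is a linear_char)).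
rewrite !mulr_sumr -sumrB /=.
apply: eq_bigr => i _; rewrite -[4%N]/(2 * 2)%N exprM irr1_sq.
by case: ifP => _; ring.
Qed.

End TwoDegrees.

Section TwoClassSizes.

Variables (gT : finGroupType) (G : {group gT}) (s : nat).
Hypothesis class_card_two :
  {in G, forall g, #|(g ^: G)%g| = 1%N \/ #|(g ^: G)%g| = s}.
Hypothesis s_gt0 : (0 < s)%N.
Local Notation N := (#|G|%:R : algC).

Lemma class_size_two g :
  g \in G -> class_size G g = if g \in 'Z(G)%g then 1 else s%:R.
Proof.
move=> Gg; rewrite center_class_card1 // /class_size.
by case: (class_card_two Gg) => ->; [rewrite eqxx | case: eqP => [-> |]].
Qed.

Lemma class_dot_split (i j : Iirr G) : class_dot i j
  = s%:R * N * (i == j)%:R - (s%:R - 1) * center_dot i j.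
Proof.
rewrite -mulrA; have <- : \sum_(g in G) 'chi[G]_i g * ('chi_j g)^* = N * (i == j)%:R.
  by rewrite -cfdot_irr cfdotE mulVKf ?neq0CG.
rewrite /class_dot /center_dot -sum_mkcond_center !mulr_sumr -sumrB.
by apply: eq_bigr => g Gg; rewrite class_size_two //; case: ifP => _; ring.
Qed.

Lemma norm_class_dot (i j : Iirr G) : `|class_dot i j|
  = class_dot i j + 2 * (s%:R - 1) * center_dot i j * (i != j)%:R.
Proof.
have s1_ge0 : 0 <= s%:R - 1 :> algC by rewrite subr_ge0 ler1n.
rewrite class_dot_split; have [<- | ne_ij] /= := eqVneq i j.
  rewrite mulr1 mulr0 addr0 ger0_norm //.
  have -> : s%:R * N - (s%:R - 1) * center_dot i i
            = N + (s%:R - 1) * (N - center_dot i i) by ring.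
  by rewrite addr_ge0 ?ler0n // mulr_ge0 // subr_ge0 center_dotii_le.
by rewrite mulr0 sub0r normrN ger0_norm ?mulr_ge0 ?center_dot_ge0 //; ring.
Qed.

Lemma AMZA_two_class_sizes : AMZA G = (N ^+ 2)^-1 *
  (N ^+ 2 + 2 * (s%:R - 1) * (N ^+ 2 - #|'Z(G)%g|%:R * \sum_i 'chi[G]_i 1%g ^+ 4)).
Proof.
rewrite AMZA_sum_irr; congr (_ * _).
rewrite -sum2_irr1_center_dot_offdiag -sum2_irr1_class_dot mulr_sumr -big_split.
apply: eq_bigr => i _ /=; rewrite mulr_sumr -big_split; apply: eq_bigr => j _ /=.
by rewrite norm_class_dot; ring.
Qed.

Lemma Nirr_two_class_sizes : (Nirr G)%:R * s%:R = N + (s%:R - 1) * #|'Z(G)%g|%:R.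
Proof.
rewrite Nirr_sum_inv_class_size mulr_suml.
transitivity (\sum_(g in G) (1 + if g \in 'Z(G)%g then s%:R - 1 else 0 : algC)).
  apply: eq_bigr => g Gg; rewrite class_size_two //; case: ifP => _.
    by rewrite invr1 mul1r addrC subrK.
  by rewrite mulVf ?addr0 // pnatr_eq0 -lt0n.
by rewrite big_split /= sum_mkcond_center !sumr_const mulr_natr.
Qed.

Lemma sum_class_sizes_two : sum_class_sizes G = s%:R * N - (s%:R - 1) * #|'Z(G)%g|%:R.
Proof.
transitivity (\sum_(g in G) (s%:R - if g \in 'Z(G)%g then s%:R - 1 else 0 : algC)).
  by apply: eq_bigr => g Gg; rewrite class_size_two //; case: ifP => _; ring.
by rewrite sumrB sum_mkcond_center !sumr_const !mulr_natr.
Qed.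

End TwoClassSizes.

Lemma amenability_numerators_eq (R : comPzRingType) (N M s k a z : R) :
    k * M = N + (M - 1) * a -> k * s = N + (s - 1) * z ->
  N ^+ 2 + 2 * (s - 1) * (N ^+ 2 - z * (M * N - (M - 1) * a))
  = N ^+ 2 + 2 * (M - 1) * (N ^+ 2 - a * (s * N - (s - 1) * z)).
Proof.
move=> kM ks; have Ea : (M - 1) * a = k * M - N by rewrite kM; ring.
have Ez : (s - 1) * z = k * s - N by rewrite ks; ring.
apply/eqP; rewrite -subr_eq0.
have -> : N ^+ 2 + 2 * (s - 1) * (N ^+ 2 - z * (M * N - (M - 1) * a))
          - (N ^+ 2 + 2 * (M - 1) * (N ^+ 2 - a * (s * N - (s - 1) * z)))
          = 2 * N * (s * ((M - 1) * a) - M * ((s - 1) * z) + (s - M) * N) by ring.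
by rewrite Ea Ez; apply/eqP; ring.
Qed.

Theorem theorem4p6 (gT : finGroupType) (G : {group gT}) (m s : nat) :
  (forall d : algC, d \in cdG G <-> (d = 1 \/ d = m%:R)) ->
  (forall n : nat, n \in ccG G <-> (n = 1%N \/ n = s)) ->
  AMZA G = AMZL G.
Proof.
move=> cdG_E ccG_E.
have irr1_two i : 'chi[G]_i 1%g = 1 \/ 'chi_i 1%g = m%:R.
  by apply/cdG_E/mapP; exists i; rewrite ?mem_enum.
have m_gt0 : (0 < m)%N.
  have /mapP[i _ chi1E] : m%:R \in cdG G by apply/cdG_E; right.
  by rewrite lt0n -(eqr_nat algC) chi1E irr1_neq0.
have class_card_two : {in G, forall g, #|(g ^: G)%g| = 1%N \/ #|(g ^: G)%g| = s}.
  by move=> g Gg; apply/ccG_E/mapP; exists (g ^: G)%g; rewrite ?mem_enum ?mem_classes.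
have s_gt0 : (0 < s)%N.
  have /mapP[C] : s \in ccG G by apply/ccG_E; right.
  rewrite mem_enum => /imsetP[g _ ->] ->.
  by rewrite card_gt0; apply/set0Pn; exists g; apply: class_refl.
rewrite (AMZA_two_class_sizes class_card_two s_gt0) (AMZL_two_degrees irr1_two m_gt0).
rewrite (sum_irr1_4 irr1_two) (sum_class_sizes_two class_card_two).
congr (_ * _); apply: amenability_numerators_eq.
- exact: Nirr_two_degrees.
- exact: Nirr_two_class_sizes.
Qed.
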